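(* Let $V$ be a finite set and $E^+,E^-\subseteq\binom{V}{2}$. Let \[ \hat{\mathcal{C}} := \{\hat X\in\mathbb{S}^{\{0\}\cup V}_+ : \hat X_{00}=1,\ \hat X_{ii}=\hat X_{0i}\ \forall i\in V,\ \hat X_{ij}\ge 0\ \forall ij\in E^+,\ \hat X_{ij}\le 0\ \forall ij\in E^-\}. \] Then a point $\hat X\in\hat{\mathcal{C}}$ is a vertex of $\hat{\mathcal{C}}$ if and only if $\operatorname{rank}(\hat X)=1$.
   Context: $0$ is a new index not in $V$. $\mathbb{S}^{W}_+$ denotes the real symmetric positive semidefinite matrices indexed by a finite set $W$, with trace inner product. $\binom{V}{2}$ is the set of 2-element subsets $ij=\{i,j\}$ of $V$. For a convex set $\mathcal{C}$ in a finite-dimensional space $\mathbb{E}$ and $\bar x\in\mathcal{C}$, the normal cone is $N_{\mathcal{C}}(\bar x):=\{c : \langle c,x\rangle\le\langle c,\bar x\rangle\ \forall x\in\mathcal{C}\}$; $\bar x$ is a vertex if $\dim N_{\mathcal{C}}(\bar x)=\dim\mathbb{E}$ (here $\mathbb{E}=\mathbb{S}^{\{0\}\cup V}$). *)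

From HB Require Import structures.
From mathcomp Require Import all_boot all_order all_algebra.
From mathcomp Require Import reals.
Set Implicit Arguments. Unset Strict Implicit. Unset Printing Implicit Defensive.
Import Order.TTheory GRing.Theory Num.Theory.
Local Open Scope ring_scope.

Section Defs.
Variable R : realType.

Definition symmx m (X : 'M[R]_m) : Prop := X^T = X.

Definition psdmx m (X : 'M[R]_m) : Prop :=
  symmx X /\ forall v : 'cV[R]_m, 0 <= (v^T *m X *m v) 0 0.

Definition trip m (A B : 'M[R]_m) : R := \tr (A^T *m B).

(* The set \hat C; the index set {0} ∪ V is 'I_n.+1 with 0 = ord0 and
   i ∈ V = 'I_n represented by lift ord0 i. *)
Definition hatC n (Ep Em : {set {set 'I_n}}) (X : 'M[R]_n.+1) : Prop :=
  psdmx X /\ X ord0 ord0 = 1 /\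
  (forall i : 'I_n, X (lift ord0 i) (lift ord0 i) = X ord0 (lift ord0 i)) /\
  (forall i j : 'I_n, i != j -> [set i; j] \in Ep ->
      0 <= X (lift ord0 i) (lift ord0 j)) /\
  (forall i j : 'I_n, i != j -> [set i; j] \in Em ->
      X (lift ord0 i) (lift ord0 j) <= 0).

Definition normal_cone m (C : 'M[R]_m -> Prop) (Xb : 'M[R]_m) (c : 'M[R]_m)
  : Prop :=
  symmx c /\ forall X, C X -> trip c X <= trip c Xb.

(* [affdim_is S d]: the (affine) dimension of the nonempty set S is d, i.e.
   the affine hull of S (= x0 + span {x - x0 | x in S} for any x0 in S)
   has dimension d. *)
Definition affdim_is m (S : 'M[R]_m -> Prop) (d : nat) : Prop :=
  exists2 x0, S x0 &
    (exists s : seq 'M[R]_m, (forall x, x \in s -> S x) /\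
        \dim <<[seq (x - x0)%R | x : 'M[R]_m <- s]>>%VS = d) /\
    (forall s : seq 'M[R]_m, (forall x, x \in s -> S x) ->
        (\dim <<[seq (x - x0)%R | x : 'M[R]_m <- s]>>%VS <= d)%N).

Definition is_vertex m (C : 'M[R]_m -> Prop) (Xb : 'M[R]_m) : Prop :=
  C Xb /\ exists d, affdim_is (normal_cone C Xb) d /\ affdim_is (@symmx m) d.

End Defs.

From HB Require Import structures.
From mathcomp Require Import all_boot all_order all_algebra.
From mathcomp Require Import reals.
From mathcomp Require Import ring lra.
Import Order.TTheory GRing.Theory Num.Theory.
Local Open Scope ring_scope.
Set Implicit Arguments. Unset Strict Implicit. Unset Printing Implicit Defensive.

(* The constraint normals of X_00 = 1 and X_aa = X_0a, and -w w^T for every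
   w in the kernel of X, always lie in the normal cone of \hat C at X.  If
   X = x x^T has rank one (so x_0 = 1 and x_a is 0 or 1), the kernel is spanned
   by the e_a - x_a e_0 and these normals span all symmetric matrices.  If
   rank X >= 2, write X as the Gram matrix of v_0, ..., v_n with |v_0| = 1 and
   pick a unit vector beta in their span orthogonal to v_0.  Rotating v_0
   towards beta while rescaling the other v_a by nonnegative factors stays in
   \hat C and gives a curve through X with nonzero tangent Y; every normal c is
   then orthogonal to Y, so the normal cone lies in a hyperplane. *)

Section BilinearForm.
Variables (R : realType) (m : nat).
Implicit Types (X A B : 'M[R]_m) (u v w : 'cV[R]_m).

Definition bform X u v : R := (u^T *m X *m v) 0 0.

Lemma bformDl X u1 u2 v : bform X (u1 + u2) v = bform X u1 v + bform X u2 v.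
Proof. by rewrite /bform linearD /= !mulmxDl mxE. Qed.

Lemma bformDr X u v1 v2 : bform X u (v1 + v2) = bform X u v1 + bform X u v2.
Proof. by rewrite /bform !mulmxDr mxE. Qed.

Lemma bformZl X k u v : bform X (k *: u) v = k * bform X u v.
Proof. by rewrite /bform linearZ /= -!scalemxAl mxE. Qed.

Lemma bformZr X k u v : bform X u (k *: v) = k * bform X u v.
Proof. by rewrite /bform -!scalemxAr mxE. Qed.

Lemma bformBl X u1 u2 v : bform X (u1 - u2) v = bform X u1 v - bform X u2 v.
Proof. by rewrite bformDl -scaleN1r bformZl mulN1r. Qed.

Lemma bformBr X u v1 v2 : bform X u (v1 - v2) = bform X u v1 - bform X u v2.
Proof. by rewrite bformDr -scaleN1r bformZr mulN1r. Qed.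

Lemma bform_sumr X u I (r : seq I) (P : pred I) (F : I -> 'cV[R]_m) :
  bform X u (\sum_(i <- r | P i) F i) = \sum_(i <- r | P i) bform X u (F i).
Proof. by apply: (big_morph _ (bformDr X u)); rewrite /bform mulmx0 mxE. Qed.

Lemma bform_delta X a b : bform X (delta_mx a 0) (delta_mx b 0) = X a b.
Proof. by rewrite /bform trmx_delta -rowE -colE !mxE. Qed.

Lemma bformC X u v : X^T = X -> bform X u v = bform X v u.
Proof.
move=> sym_X; have tr11 (M : 'M[R]_1) : M 0 0 = M^T 0 0 by rewrite mxE.
by rewrite /bform tr11 !trmx_mul trmxK sym_X mulmxA.
Qed.

Lemma congr_mx_bform X A B k l : (A^T *m X *m B) k l = bform X (col k A) (col l B).
Proof. by rewrite -bform_delta /bform !colE trmx_mul !mulmxA. Qed.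

Lemma colv_sum_delta v : v = \sum_b v b 0 *: delta_mx b 0.
Proof.
by rewrite {1}(matrix_sum_delta v); apply: eq_bigr => b _; rewrite big_ord1.
Qed.

End BilinearForm.

Section TraceInnerProduct.
Variables (R : realType) (m : nat).
Implicit Types (A B Y : 'M[R]_m) (u v : 'cV[R]_m).

Lemma tripDl A B Y : trip (A + B) Y = trip A Y + trip B Y.
Proof. by rewrite /trip linearD /= mulmxDl mxtraceD. Qed.

Lemma tripZl k A Y : trip (k *: A) Y = k * trip A Y.
Proof. by rewrite /trip linearZ /= -scalemxAl mxtraceZ. Qed.

Lemma tripBl A B Y : trip (A - B) Y = trip A Y - trip B Y.
Proof. by rewrite tripDl -scaleN1r tripZl mulN1r. Qed.

Lemma tripDr A B Y : trip Y (A + B) = trip Y A + trip Y B.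
Proof. by rewrite /trip mulmxDr mxtraceD. Qed.

Lemma tripZr k A Y : trip Y (k *: A) = k * trip Y A.
Proof. by rewrite /trip -scalemxAr mxtraceZ. Qed.

Lemma trip0l Y : trip 0 Y = 0.
Proof. by rewrite /trip linear0 mul0mx mxtrace0. Qed.

Lemma trip_suml Y I (r : seq I) (P : pred I) (F : I -> 'M[R]_m) :
  trip (\sum_(i <- r | P i) F i) Y = \sum_(i <- r | P i) trip (F i) Y.
Proof.
apply: (big_morph (fun A => trip A Y) (fun A B => tripDl A B Y)).
exact: trip0l.
Qed.

Lemma trip_outer u v Y : trip (u *m v^T) Y = bform Y u v.
Proof.
rewrite /trip /bform trmx_mul trmxK -mulmxA mxtrace_mulC mulmxA.
by rewrite mxtrace_mulC trace_mx11 mulmxA.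
Qed.

Lemma tripE A B : trip A B = \sum_a \sum_b A a b * B a b.
Proof.
rewrite /trip /mxtrace exchange_big; apply: eq_bigr => b _; rewrite mxE.
by apply: eq_bigr => a _; rewrite !mxE.
Qed.

Lemma trip_self_eq0 Y : trip Y Y = 0 -> Y = 0.
Proof.
have sq_ge0 (x : R) : 0 <= x * x by rewrite -expr2 sqr_ge0.
rewrite tripE => sum0; apply/matrixP => a b; rewrite mxE.
have row_ge0 c : 0 <= \sum_d Y c d * Y c d by apply: sumr_ge0.
have row0 := psumr_eq0P (fun c _ => row_ge0 c) sum0 (i := a) isT.
have entry0 := psumr_eq0P (fun d _ => sq_ge0 (Y a d)) row0 (i := b) isT.
by apply/eqP; rewrite -[_ == 0]orbb -mulf_eq0 entry0.
Qed.

Lemma symmxD A B : symmx A -> symmx B -> symmx (A + B).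
Proof. by rewrite /symmx => symA symB; rewrite linearD /= symA symB. Qed.

Lemma symmxB A B : symmx A -> symmx B -> symmx (A - B).
Proof. by rewrite /symmx => symA symB; rewrite linearB /= symA symB. Qed.

Definition symouter u v : 'M[R]_m := u *m v^T + v *m u^T.

Lemma symmx_symouter u v : symmx (symouter u v).
Proof. by rewrite /symmx /symouter linearD /= !trmx_mul !trmxK addrC. Qed.

Lemma trip_symouter u v Y : trip (symouter u v) Y = bform Y u v + bform Y v u.
Proof. by rewrite /symouter tripDl !trip_outer. Qed.

Ltac entrywise := apply/matrixP => i j; rewrite !mxE !big_ord1 !mxE; ring.

Lemma symouter_polar u v :
  symouter u v = (u + v) *m (u + v)^T - u *m u^T - v *m v^T.
Proof. by entrywise. Qed.

Lemma symouter_shift u v w (x y : R) : symouter (u + x *: w) (v + y *: w) =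
  symouter u v + y *: symouter u w + x *: symouter v w + (x * y) *: symouter w w.
Proof. by entrywise. Qed.

Lemma symouter_shift_diff u w (x : R) :
  symouter (u + x *: w) (u + x *: w) - symouter w (u + x *: w) =
  symouter u u + (2 * x - 1) *: symouter u w + (x ^+ 2 - x) *: symouter w w.
Proof. by entrywise. Qed.

End TraceInnerProduct.

Section AffineDimension.
Variables (R : realType) (m : nat).

Definition symouter_deltas : seq 'M[R]_m :=
  [seq symouter (delta_mx a 0) (delta_mx b 0) | a <- enum 'I_m, b <- enum 'I_m].

Definition dim_symmx := \dim <<symouter_deltas>>%VS.

Lemma symouter_delta a b :
  symouter (delta_mx a 0) (delta_mx b 0) = delta_mx a b + delta_mx b a :> 'M[R]_m.
Proof. by rewrite /symouter !trmx_delta !mul_delta_mx. Qed.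

Lemma symouter_delta_in_span a b :
  symouter (delta_mx a 0) (delta_mx b 0) \in <<symouter_deltas>>%VS.
Proof. by apply: memv_span; apply: allpairs_f; rewrite mem_enum. Qed.

Lemma symmx_in_span (M : 'M[R]_m) : symmx M -> M \in <<symouter_deltas>>%VS.
Proof.
move=> symM.
have -> : M = 2^-1 *: \sum_a \sum_b M a b *: symouter (delta_mx a 0) (delta_mx b 0).
  have -> : \sum_a \sum_b M a b *: symouter (delta_mx a 0) (delta_mx b 0) = M + M^T.
    rewrite [in RHS](matrix_sum_delta M) linear_sum -big_split /=.
    apply: eq_bigr => a _; rewrite linear_sum -big_split /=.
    by apply: eq_bigr => b _; rewrite symouter_delta scalerDr linearZ /= trmx_delta.
  by rewrite symM -mulr2n -scaler_nat scalerA mulVf ?pnatr_eq0 // scale1r.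
apply/rpredZ/rpred_sum => a _; apply/rpred_sum => b _.
exact/rpredZ/symouter_delta_in_span.
Qed.

Lemma affdim_spanning_cone (S : 'M[R]_m -> Prop) (s : seq 'M[R]_m) :
  (forall M, S M -> symmx M) -> S 0 -> (forall M, M \in s -> S M) ->
  (forall a b, symouter (delta_mx a 0) (delta_mx b 0) \in <<s>>%VS) ->
  affdim_is S dim_symmx.
Proof.
move=> symS S0 sS spans; exists 0 => //; split.
  exists s; split => //; rewrite (eq_map (@subr0 _)) map_id.
  apply/eqP; rewrite eqn_leq /dim_symmx; apply/andP; split; apply: dimvS.
    by apply/span_subvP => M /sS /symS /symmx_in_span.
  by apply/span_subvP => M /allpairsP [[a b] [_ _ ->]]; apply: spans.
move=> s' s'S; apply: dimvS; apply/span_subvP => M /mapP [N /s'S SN ->].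
by rewrite subr0; apply/symmx_in_span/symS.
Qed.

Lemma affdim_symmx : affdim_is (@symmx R m) dim_symmx.
Proof.
apply: (affdim_spanning_cone (s := symouter_deltas)) => //.
- by rewrite /symmx trmx0.
- by move=> M /allpairsP [[a b] [_ _ ->]]; apply: symmx_symouter.
- exact: symouter_delta_in_span.
Qed.

Lemma affdim_orth_lt (S : 'M[R]_m -> Prop) (Y : 'M[R]_m) d d' :
  symmx Y -> Y != 0 -> (forall c, S c -> symmx c) ->
  (forall c, S c -> trip c Y = 0) ->
  affdim_is S d -> affdim_is (@symmx R m) d' -> (d < d')%N.
Proof.
move=> symY Y_neq0 symS orthS [x0 Sx0 [[s [sS <-]] _]] [z0 symz0 [_ dim_le]].
set L := [seq M - x0 | M <- s].
have orthL M : M \in <<L>>%VS -> trip M Y = 0.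
  move=> LM; rewrite (coord_span (X := in_tuple L) LM) trip_suml big1 // => i _.
  have /mapP [N /sS SN ->] : L`_i \in L by apply: mem_nth.
  by rewrite tripZl tripBl !orthS // subrr mulr0.
have Y_notin : Y \notin <<L>>%VS.
  by apply: contra Y_neq0 => /orthL /trip_self_eq0 ->.
set s' := [seq M - x0 + z0 | M <- s] ++ [:: Y + z0].
have s'_sym M : M \in s' -> symmx M.
  rewrite mem_cat => /orP [/mapP [N /sS SN ->] | /[1!inE] /eqP ->].
    by apply: symmxD => //; apply: symmxB; apply: symS.
  exact: symmxD.
have := dim_le s' s'_sym.
have -> : [seq M - z0 | M <- s'] = L ++ [:: Y].
  rewrite map_cat /= addrK -map_comp; congr (_ ++ _).
  by apply: eq_map => M /=; rewrite addrK.
apply: leq_trans; rewrite span_cat (ltn_leqif (dimv_leqif_sup (addvSl _ _))).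
apply: contra Y_notin => /subvP; apply; apply: (subvP (addvSr _ _)).
exact: memv_span1.
Qed.

End AffineDimension.

Section Psd.
Variables (R : realType) (m : nat).

Lemma psd_isotropic_orth (Y : 'M[R]_m) v w : symmx Y ->
  (forall z, 0 <= bform Y z z) -> bform Y v v = 0 -> bform Y w v = 0.
Proof.
move=> symY psdY Yvv0; set b := bform Y w v; set A := bform Y w w.
have A_ge0 : 0 <= A := psdY w.
set t := - b / (A + 1).
have tA1 : t * (A + 1) = - b by rewrite divfK // gt_eqF // ltr_wpDl.
have := psdY (t *: w + v).
rewrite !bformDl !bformDr !bformZl !bformZr Yvv0 (bformC v w symY) -/b -/A => q_ge0.
have : 0 <= - (b ^+ 2 * (A + 2)).
  have := mulr_ge0 (sqr_ge0 (A + 1)) q_ge0.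
  have -> : (A + 1) ^+ 2 * (t * (t * A) + t * b + (t * b + 0)) =
    (t * (A + 1)) ^+ 2 * A + 2 * (t * (A + 1)) * b * (A + 1) by ring.
  by rewrite tA1; congr (0 <= _); ring.
rewrite oppr_ge0 pmulr_lle0 ?ltr_wpDl // => b2_le0.
by apply/eqP; rewrite -sqrf_eq0 eq_le b2_le0 sqr_ge0.
Qed.

End Psd.

Section HatC.
Variables (R : realType) (n : nat) (Ep Em : {set {set 'I_n}}).
Local Notation C := (@hatC R n Ep Em).
Implicit Types (X Y : 'M[R]_n.+1).

Lemma hatC_sym Y : C Y -> symmx Y.
Proof. by case=> [[]]. Qed.

Lemma hatC_psd Y : C Y -> forall v, 0 <= bform Y v v.
Proof. by case=> [[_ psdY]] _ v; apply: psdY. Qed.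

Lemma hatC_00 Y : C Y -> Y 0 0 = 1.
Proof. by case=> _ []. Qed.

Lemma hatC_diag Y : C Y -> forall a, Y a a = Y 0 a.
Proof. by case=> _ [_ [diagY _]] a; case: (unliftP 0 a) => [i ->|->]. Qed.

Lemma hatC_col0 Y : C Y -> forall a, Y a 0 = Y 0 a.
Proof. by move=> CY a; rewrite -{1}(hatC_sym CY) mxE. Qed.

End HatC.

Section RankOneVertex.
Variables (R : realType) (n : nat) (Ep Em : {set {set 'I_n}}).
Local Notation C := (@hatC R n Ep Em).
Local Notation e a := (delta_mx a 0 : 'cV[R]_n.+1).
Implicit Types (X Y : 'M[R]_n.+1) (u v w : 'cV[R]_n.+1).

Definition diag_normal a : 'M[R]_n.+1 :=
  symouter (e a) (e a) - symouter (e 0) (e a).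

Lemma trip_diag_normal Y a : C Y -> trip (diag_normal a) Y = 0.
Proof.
move=> CY; rewrite tripBl !trip_symouter !bform_delta.
by rewrite (hatC_col0 CY) (hatC_diag CY) subrr.
Qed.

Lemma normal_cone_e00 X : C X -> normal_cone C X (symouter (e 0) (e 0)).
Proof.
move=> CX; split=> [|Y CY]; first exact: symmx_symouter.
by rewrite !trip_symouter !bform_delta (hatC_00 CY) (hatC_00 CX).
Qed.

Lemma normal_cone_diag X a : C X -> normal_cone C X (diag_normal a).
Proof.
move=> CX; split=> [|Y CY]; first by apply: symmxB; apply: symmx_symouter.
by rewrite !trip_diag_normal.
Qed.

Lemma normal_cone_kernel X w : C X -> bform X w w = 0 ->
  normal_cone C X (- (w *m w^T)).
Proof.
move=> CX Xww0; split=> [|Y CY].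
  by rewrite /symmx linearN /= trmx_mul trmxK.
by rewrite -!scaleN1r !tripZl !trip_outer Xww0 mulr0 mulN1r oppr_le0 (hatC_psd CY).
Qed.

Lemma rank1_entries X : \rank X = 1%N -> X 0 0 = 1 ->
  forall a b, X a b = X a 0 * X 0 b.
Proof.
move=> rankX X00 a b; rewrite -[LHS]mulr1 -X00.
move: (col_base X) (row_base X) (mulmx_base X); rewrite rankX => Xc Xr <-.
by rewrite !mxE !big_ord1; ring.
Qed.

(* For X = x x^T with x_0 = 1, the vectors e_a - x_a e_0 span the kernel of X. *)
Definition kerv X a := e a - X a 0 *: e 0.

Lemma bform_kerv X a z : C X -> \rank X = 1%N -> bform X (kerv X a) z = 0.
Proof.
move=> CX rankX; rewrite (colv_sum_delta z) bform_sumr big1 // => b _.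
rewrite bformZr bformBl bformZl !bform_delta.
by rewrite (rank1_entries rankX (hatC_00 CX) a b) subrr mulr0.
Qed.

Definition normal_gens X : seq 'M[R]_n.+1 :=
  symouter (e 0) (e 0) :: [seq diag_normal a | a <- enum 'I_n.+1] ++
  [seq - (w *m w^T) | w <- [seq kerv X a | a <- enum 'I_n.+1] ++
     [seq kerv X a + kerv X b | a <- enum 'I_n.+1, b <- enum 'I_n.+1]].

Lemma symouter_in_normal_span X : C X -> \rank X = 1%N ->
  forall a b, symouter (e a) (e b) \in <<normal_gens X>>%VS.
Proof.
move=> CX rankX; have X_ab := rank1_entries rankX (hatC_00 CX).
set W := <<normal_gens X>>%VS.
have outer_in w : w \in [seq kerv X a | a <- enum 'I_n.+1] ++
    [seq kerv X a + kerv X b | a <- enum 'I_n.+1, b <- enum 'I_n.+1] ->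
    w *m w^T \in W.
  move=> w_in; rewrite -[_ *m _]opprK rpredN; apply: memv_span.
  by rewrite inE mem_cat (map_f (fun w => - (w *m w^T)) w_in) !orbT.
have kerv_in a b : symouter (kerv X a) (kerv X b) \in W.
  rewrite symouter_polar; apply: rpredB; first apply: rpredB.
  - apply: outer_in; rewrite mem_cat orbC.
    by rewrite (allpairs_f (fun a b => kerv X a + kerv X b)) ?mem_enum.
  - by apply: outer_in; rewrite mem_cat map_f ?mem_enum.
  - by apply: outer_in; rewrite mem_cat map_f ?mem_enum.
have kerv_e0_in a : symouter (kerv X a) (e 0) \in W.
  set x := X a 0.
  have xx : x ^+ 2 = x.
    rewrite expr2 {2}/x (hatC_col0 CX a) -(X_ab a a).
    by rewrite (hatC_diag CX) -(hatC_col0 CX).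
  have sq1 : (2 * x - 1) ^+ 2 = 1.
    by rewrite sqrrB expr1n exprMn xx mulr1 -mulrA mulr_natl; ring.
  have diag_eq : diag_normal a - symouter (kerv X a) (kerv X a) =
      (2 * x - 1) *: symouter (kerv X a) (e 0).
    rewrite /diag_normal -[e a](subrK (x *: e 0)) symouter_shift_diff xx subrr.
    by rewrite scale0r addr0 addrAC subrr add0r.
  rewrite -[symouter _ _]scale1r -sq1 expr2 -scalerA -diag_eq.
  rewrite rpredZ // rpredB //; apply: memv_span.
  by rewrite inE mem_cat map_f ?mem_enum ?orbT.
move=> a b; rewrite -[e a](subrK (X a 0 *: e 0)) -[e b](subrK (X b 0 *: e 0)).
rewrite symouter_shift -!/(kerv X _).
apply: rpredD; first apply: rpredD; first apply: rpredD.
- exact: kerv_in.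
- exact/rpredZ/kerv_e0_in.
- exact/rpredZ/kerv_e0_in.
- by apply/rpredZ/memv_span; rewrite mem_head.
Qed.

Lemma rank1_vertex X : C X -> \rank X = 1%N -> is_vertex C X.
Proof.
move=> CX rankX; split=> //; exists (dim_symmx R n.+1).
split; last exact: affdim_symmx.
apply: (affdim_spanning_cone (s := normal_gens X)); first by move=> M [].
- split=> [|Y _]; first by rewrite /symmx trmx0.
  by rewrite !trip0l.
- move=> M; rewrite inE mem_cat => /orP [/eqP -> | /orP [/mapP [a _ ->] | ]].
  + exact: normal_cone_e00.
  + exact: normal_cone_diag.
  move=> /mapP [w w_in ->]; apply: normal_cone_kernel => //.
  move: w_in; rewrite mem_cat => /orP [/mapP [a _ ->] | /allpairsP [[a b] [_ _ ->]]].
    exact: bform_kerv.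
  by rewrite bformDl !bform_kerv // addr0.
- exact: symouter_in_normal_span.
Qed.

End RankOneVertex.

Section OrthogonalUnit.
Variables (R : realType) (n : nat).

Lemma exists_orth_unit (X : 'M[R]_n.+1) : symmx X ->
  (forall v, 0 <= bform X v v) -> X 0 0 = 1 -> \rank X != 1%N ->
  exists beta, bform X (delta_mx 0 0) beta = 0 /\ bform X beta beta = 1.
Proof.
move=> symX psdX X00 rankX.
pose g j : 'cV[R]_n.+1 := delta_mx j 0 - X 0 j *: delta_mx 0 0.
have Xe0g j : bform X (delta_mx 0 0) (g j) = 0.
  by rewrite bformBr bformZr !bform_delta X00 mulr1 subrr.
have [[j Xgj_neq0] | Xg0] := altP (@existsP _ (fun j => bform X (g j) (g j) != 0)).
  have Xgj_gt0 : 0 < bform X (g j) (g j) by rewrite lt_def Xgj_neq0 psdX.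
  exists ((Num.sqrt (bform X (g j) (g j)))^-1 *: g j).
  rewrite bformZr Xe0g mulr0 bformZl bformZr mulrA -invfM -expr2.
  by rewrite sqr_sqrtr ?ltW // mulVf.
(* Every g j is isotropic, so it lies in the kernel: X = X_{.0} X_{0.}. *)
have Xg j i : bform X (delta_mx i 0) (g j) = 0.
  apply: psd_isotropic_orth => //; apply/eqP.
  by move/existsPn: Xg0 => /(_ j); rewrite negbK.
have rank1X : X = col 0 X *m row 0 X.
  apply/matrixP => i j; rewrite !mxE big_ord1 !mxE.
  move: (Xg j i); rewrite bformBr bformZr !bform_delta => /eqP.
  by rewrite subr_eq0 mulrC => /eqP.
move: rankX; rewrite eqn_leq negb_and -ltnNge lt0n mxrank_eq0 => /orP [].
  by rewrite rank1X ltnNge (leq_trans (mxrankM_maxl _ _) (rank_leq_col _)).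
by rewrite negbK => /eqP X0; move: X00; rewrite X0 mxE => /eqP; rewrite eq_sym oner_eq0.
Qed.

End OrthogonalUnit.

Section FirstOrderTerm.
Variable R : realType.

Lemma first_order_term_le0 (d y k : R) : 0 < d ->
  (forall s, 0 < s -> s <= d -> 2 * s * (1 - s ^+ 2) * y <= 4 * s ^+ 2 * k) ->
  y <= 0.
Proof.
move=> d_gt0 ineq; rewrite leNgt; apply/negP => y_gt0.
set K := `|k| + 1; have K_gt0 : 0 < K by rewrite ltr_wpDl.
have k_le_K : k <= K by rewrite (le_trans (ler_norm k)) ?lerDl.
set s := Num.min (Num.min d 2^-1) (y / (4 * K)).
have s_gt0 : 0 < s by rewrite !lt_min d_gt0 invr_gt0 ltr0n divr_gt0 ?mulr_gt0.
have s_le_d : s <= d by rewrite !ge_min lexx.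
have s_le_half : s <= 2^-1 by rewrite !ge_min lexx orbT.
have sK_le_y : s * (4 * K) <= y.
  by rewrite -ler_pdivlMr ?mulr_gt0 // !ge_min lexx orbT.
have := ineq s s_gt0 s_le_d.
have : 4 * s ^+ 2 * k <= s * y by nra.
have : 0 < s * y * (1 - 2 * s ^+ 2).
  by rewrite !mulr_gt0 // subr_gt0; nra.
nra.
Qed.

Lemma first_order_term_eq0 (d y k : R) : 0 < d ->
  (forall s, `|s| <= d -> 2 * s * (1 - s ^+ 2) * y <= 4 * s ^+ 2 * k) -> y = 0.
Proof.
move=> d_gt0 ineq; apply/eqP; rewrite eq_le -[0 <= y]oppr_le0.
apply/andP; split; apply: (first_order_term_le0 d_gt0 (k := k)) => s s_gt0 s_le_d.
  by apply: ineq; rewrite gtr0_norm.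
have := ineq (- s); rewrite normrN gtr0_norm // => /(_ s_le_d).
by rewrite sqrrN mulrN !mulNr mulrN.
Qed.

End FirstOrderTerm.

Section Curve.
Variables (R : realType) (n : nat) (Ep Em : {set {set 'I_n}}).
Local Notation C := (@hatC R n Ep Em).
Local Notation e a := (delta_mx a 0 : 'cV[R]_n.+1).
Variable X : 'M[R]_n.+1.
Hypothesis CX : C X.
Variable beta : 'cV[R]_n.+1.
Hypotheses (Xe0beta : bform X (e 0) beta = 0) (Xbeta1 : bform X beta beta = 1).

Let symX : X^T = X := hatC_sym CX.

Definition ratio a := bform X beta (e a) / X a a.

Lemma ratioK a : ratio a * X a a = bform X beta (e a).
Proof.
rewrite /ratio; have [Xaa0 | Xaa_neq0] := eqVneq (X a a) 0; last by rewrite divfK.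
rewrite Xaa0 mulr0; apply/esym/psd_isotropic_orth; first exact: symX.
  exact: hatC_psd CX.
by rewrite bform_delta.
Qed.

Definition curve_gen : 'M[R]_n.+1 :=
  \matrix_(a, b) if b == 0 then beta a 0 else (a == b)%:R * ratio b.

Definition tangent := X *m curve_gen + curve_gen^T *m X.

Lemma col0_curve_gen : col 0 curve_gen = beta.
Proof. by apply/matrixP => i j; rewrite (ord1 j) !mxE eqxx. Qed.

Lemma col_curve_gen a : a != 0 -> col a curve_gen = ratio a *: e a.
Proof.
move=> a_neq0; apply/matrixP => i j.
by rewrite (ord1 j) !mxE (negbTE a_neq0) eqxx andbT mulrC.
Qed.

Lemma symmx_tangent : symmx tangent.
Proof. by rewrite /symmx /tangent linearD /= !trmx_mul trmxK symX addrC. Qed.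

Lemma tangent_neq0 : tangent != 0.
Proof.
have [a Xbeta_a] : exists a, bform X beta (e a) != 0.
  apply/existsP; apply: contraT => /existsPn Xbeta0; move: Xbeta1.
  rewrite {2}(colv_sum_delta beta) bform_sumr big1 => [/eqP|b _].
    by rewrite eq_sym oner_eq0.
  by rewrite bformZr (eqP (negPn (Xbeta0 b))) mulr0.
have a_neq0 : a != 0.
  by apply: contra Xbeta_a => /eqP ->; rewrite (bformC _ _ symX) Xe0beta.
apply: contraNneq Xbeta_a => /matrixP /(_ a 0) /eqP.
rewrite [X in X == _]mxE.
have := congr_mx_bform X 1%:M curve_gen a 0; rewrite trmx1 mul1mx => ->.
have := congr_mx_bform X curve_gen 1%:M a 0; rewrite mulmx1 => ->.
rewrite !col1 col0_curve_gen (col_curve_gen a_neq0).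
rewrite bformZl bform_delta (hatC_col0 CX) -(hatC_diag CX) ratioK mxE.
by rewrite (bformC _ _ symX) -mulr2n mulrn_eq0.
Qed.

(* Viewing X as the Gram matrix of vectors v_0, ..., v_n, the curve rotates
   v_0 by the angle 2 atan s towards the unit vector beta (orthogonal to v_0)
   and rescales each v_a (a != 0) by tau s a >= 0, chosen so that the
   diagonal constraint still holds. *)
Definition lam (s : R) := (1 + s ^+ 2)^-1.

Definition curve_map (s : R) : 'M[R]_n.+1 :=
  lam s *: ((1 - s ^+ 2) *: 1%:M + (2 * s) *: curve_gen).

Definition curve s := (curve_map s)^T *m X *m curve_map s.

Definition tau s a := lam s * ((1 - s ^+ 2) + 2 * s * ratio a).

Lemma lamK s : lam s * (1 + s ^+ 2) = 1.
Proof. by rewrite mulVf // gt_eqF // ltr_wpDr // sqr_ge0. Qed.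

Lemma lam_gt0 s : 0 < lam s.
Proof. by rewrite invr_gt0 ltr_wpDr // sqr_ge0. Qed.

Lemma curve_expand s : curve s = lam s ^+ 2 *:
  ((1 - s ^+ 2) ^+ 2 *: X + (2 * s * (1 - s ^+ 2)) *: tangent +
   (4 * s ^+ 2) *: (curve_gen^T *m X *m curve_gen)).
Proof.
have trT :
  (curve_map s)^T = lam s *: ((1 - s ^+ 2) *: 1%:M + (2 * s) *: curve_gen^T).
  by rewrite /curve_map !linearZ /= linearD /= !linearZ /= trmx1.
rewrite /curve trT /curve_map -!scalemxAl -!scalemxAr !mulmxDl !mulmxDr.
rewrite -!scalemxAl -!scalemxAr !mul1mx !mulmx1 !scalerA /tangent -expr2.
congr (_ *: _); rewrite scalerDr !addrA; congr (_ + _ + _ + _); congr (_ *: _); ring.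
Qed.

Lemma col0_curve_map s :
  col 0 (curve_map s) = lam s *: ((1 - s ^+ 2) *: e 0 + (2 * s) *: beta).
Proof. by apply/matrixP => i j; rewrite (ord1 j) !mxE !eqxx /= !andbT. Qed.

Lemma col_curve_map s a : a != 0 -> col a (curve_map s) = tau s a *: e a.
Proof.
move=> a_neq0; apply/matrixP => i j.
by rewrite (ord1 j) !mxE (negbTE a_neq0) !eqxx andbT /tau; ring.
Qed.

Lemma curve_entry s k l :
  curve s k l = bform X (col k (curve_map s)) (col l (curve_map s)).
Proof. exact: congr_mx_bform. Qed.

Lemma curve00 s : curve s 0 0 = 1.
Proof.
rewrite curve_entry col0_curve_map bformZl bformZr !bformDl !bformDr !bformZl !bformZr.
rewrite !bform_delta Xe0beta Xbeta1 (bformC _ _ symX) Xe0beta (hatC_00 CX).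
by transitivity ((lam s * (1 + s ^+ 2)) ^+ 2); [ring | rewrite lamK expr1n].
Qed.

Lemma curve0a s a : a != 0 -> curve s 0 a = curve s a a.
Proof.
move=> a_neq0; rewrite !curve_entry col0_curve_map (col_curve_map s a_neq0).
rewrite !bformZl !bformZr bformDl !bformZl !bform_delta (hatC_diag CX) -ratioK.
by rewrite /tau (hatC_diag CX); ring.
Qed.

Lemma curve_ab s a b : a != 0 -> b != 0 -> curve s a b = tau s a * tau s b * X a b.
Proof.
move=> a_neq0 b_neq0.
rewrite curve_entry (col_curve_map s a_neq0) (col_curve_map s b_neq0).
by rewrite bformZl bformZr bform_delta; ring.
Qed.

Definition radius := (2 * \sum_a `|ratio a| + 2)^-1.

Lemma radius_gt0 : 0 < radius.
Proof. by rewrite invr_gt0 ltr_wpDl ?mulr_ge0 ?sumr_ge0. Qed.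

Lemma tau_ge0 s a : `|s| <= radius -> 0 <= tau s a.
Proof.
move=> s_le; rewrite /tau mulr_ge0 ?ltW ?lam_gt0 //.
set M := \sum_a `|ratio a|; have M_ge0 : 0 <= M by rewrite sumr_ge0.
have ratio_le : `|ratio a| <= M by rewrite /M (bigD1 a) //= lerDl sumr_ge0.
have sM_le1 : `|s| * (2 * M + 2) <= 1.
  by rewrite -ler_pdivlMr ?div1r // ltr_wpDl ?mulr_ge0.
have : - (`|s| * M) <= s * ratio a.
  rewrite lerNl (le_trans (ler_norm _)) // normrN normrM.
  exact: ler_wpM2l.
have : s ^+ 2 = `|s| ^+ 2 by rewrite real_normK ?num_real.
have : 0 <= `|s| by [].
nra.
Qed.

Lemma curve_in s : `|s| <= radius -> C (curve s).
Proof.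
move=> s_le; have lift_neq0 i : lift 0 i != 0 :> 'I_n.+1 by rewrite eq_sym neq_lift.
split; [split | split; [exact: curve00 | split; [|split]]].
- by rewrite /symmx /curve !trmx_mul trmxK symX mulmxA.
- move=> v; have := hatC_psd CX (curve_map s *m v).
  by rewrite /bform /curve !trmx_mul !mulmxA.
- by move=> i; rewrite curve0a.
- move=> i j ij Ep_ij; rewrite curve_ab //.
  apply: mulr_ge0; first by rewrite mulr_ge0 ?tau_ge0.
  by case: CX => _ [_ [_ [Ep_ge0 _]]]; apply: Ep_ge0.
- move=> i j ij Em_ij; rewrite curve_ab //.
  apply: mulr_ge0_le0; first by rewrite mulr_ge0 ?tau_ge0.
  by case: CX => _ [_ [_ [_ Em_le0]]]; apply: Em_le0.
Qed.

Lemma normal_cone_orth_tangent c : normal_cone C X c -> trip c tangent = 0.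
Proof.
move=> [_ c_max]; apply: (first_order_term_eq0 radius_gt0
  (k := trip c X - trip c (curve_gen^T *m X *m curve_gen))) => s s_le.
have := c_max _ (curve_in s_le); rewrite curve_expand tripZr !tripDr !tripZr.
set A := _ + _ + _ => le_cX.
have {le_cX} : A <= (1 + s ^+ 2) ^+ 2 * trip c X.
  have := ler_wpM2l (sqr_ge0 (1 + s ^+ 2)) le_cX.
  by rewrite mulrA -exprMn [(1 + _) * _]mulrC lamK expr1n mul1r.
rewrite -subr_ge0 (_ : _ - _ = (1 + s ^+ 2) ^+ 2 * trip c X - A) ?subr_ge0 //.
by rewrite /A /tangent tripDr; ring.
Qed.

End Curve.

Theorem theorem3p1 (R : realType) (n : nat) (Ep Em : {set {set 'I_n}})
  (HEp : forall e, e \in Ep -> #|e| = 2%N)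
  (HEm : forall e, e \in Em -> #|e| = 2%N)
  (X : 'M[R]_n.+1) (HX : hatC Ep Em X) :
  is_vertex (hatC Ep Em) X <-> \rank X = 1%N.
Proof.
split=> [[_ [d [dim_cone dim_sym]]] | rankX]; last exact: rank1_vertex.
apply/eqP; apply: contraT => rankX.
have [beta [Xe0beta Xbeta1]] :=
  exists_orth_unit (hatC_sym HX) (hatC_psd HX) (hatC_00 HX) rankX.
have := affdim_orth_lt (symmx_tangent HX beta) (tangent_neq0 HX Xe0beta Xbeta1)
  (fun c => @proj1 _ _) (normal_cone_orth_tangent HX Xe0beta Xbeta1)
  dim_cone dim_sym.
by rewrite ltnn.
Qed.
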